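(* Let $m\ge 1$, $n=2m$, and let $g(x_0,\ldots,x_{n-1})$ be a reduced polynomial in $\mathbb{F}_2[x_0,\ldots,x_{n-1}]$ (equivalently a Boolean function on $\mathbb{F}_2^n$) such that: (1) for every $0\le i\le m-1$, $g$ is unchanged when the variables $x_i$ and $x_{i+m}$ are interchanged; (2) for every $0\le i\le m-1$, no monomial of $g$ (with nonzero coefficient) contains both $x_i$ and $x_{i+m}$; (3) $g$ is rotation symmetric, i.e. $g(x_1,\ldots,x_{n-1},x_0)=g(x_0,\ldots,x_{n-1})$. Then there exists a rotation symmetric polynomial $\gamma(X_0,\ldots,X_{m-1})\in\mathbb{F}_2[X_0,\ldots,X_{m-1}]$ (i.e. $\gamma(X_0,X_1,\ldots,X_{m-1})=\gamma(X_1,\ldots,X_{m-1},X_0)$) such that $$g(x_0,\ldots,x_{n-1})=\gamma(x_0+x_m,\,x_1+x_{m+1},\,\ldots,\,x_{m-1}+x_{2m-1}).$$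
   Context: A reduced polynomial in $\mathbb{F}_2[x_0,\ldots,x_{n-1}]$ is one of the form $\sum_{u\in\mathbb{F}_2^n}c_u\prod_{i}x_i^{u_i}$ (each variable with exponent at most 1); Boolean functions on $\mathbb{F}_2^n$ are identified with such polynomials (their algebraic normal form). *)

From HB Require Import structures.
From mathcomp Require Import all_boot all_order all_algebra.
From mathcomp Require Import mpoly.
Set Implicit Arguments. Unset Strict Implicit. Unset Printing Implicit Defensive.
Import GRing.Theory.
Local Open Scope ring_scope.

Definition reduced (n : nat) (p : {mpoly 'F_2[n]}) : Prop :=
  forall (mo : 'X_{1..n}), mo \in msupp p -> forall i : 'I_n, (mo i <= 1)%N.

(* Cyclic shift of variables: p(x_1,...,x_{n-1},x_0), i.e. x_j := x_{j+1 mod n}. *)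
Definition rotate (n : nat) (p : {mpoly 'F_2[n]}) : {mpoly 'F_2[n]} :=
  p \mPo [tuple 'X_(ordS i) | i < n].

Definition rot_sym (n : nat) (p : {mpoly 'F_2[n]}) : Prop := rotate p = p.

Definition swap_vars (n : nat) (a b : 'I_n) (p : {mpoly 'F_2[n]}) : {mpoly 'F_2[n]} :=
  p \mPo [tuple 'X_(if i == a then b else if i == b then a else i) | i < n].

(** For each pair (x_i, x_{i+m}), every monomial of g contains at most one of
    the two variables, each to the power at most 1, and x_i M occurs in g iff
    x_{i+m} M does.  Hence g is fixed by the substitution x_i := x_i + x_{i+m},
    x_{i+m} := 0, which maps x_i M + x_{i+m} M to itself and kills every
    monomial containing x_{i+m} alone.  Performing these substitutions for all
    pairs gives g = gamma(x_0 + x_m, ..., x_{m-1} + x_{2m-1}) with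
    gamma = g(X_0, ..., X_{m-1}, 0, ..., 0).  Rotating the 2m variables maps
    the pair sums to their rotation (the last pair sum becomes x_m + x_0), so
    rotating gamma amounts to rotating g; specialising x_i := X_i,
    x_{i+m} := 0 then transfers rot_sym g to gamma. *)

From mathcomp Require Import all_boot all_order all_algebra perm mpoly zify.
Set Implicit Arguments.
Unset Strict Implicit.
Unset Printing Implicit Defensive.
Import GRing.Theory.
Local Open Scope ring_scope.

Lemma comp_mpolyA (R : comNzRingType) n k l (p : {mpoly R[n]})
    (lq : n.-tuple {mpoly R[k]}) (lr : k.-tuple {mpoly R[l]}) :
  p \mPo lq \mPo lr = p \mPo [tuple tnth lq i \mPo lr | i < n].
Proof.
rewrite [p \mPo lq]comp_mpolyEX [RHS]comp_mpolyEX raddf_sum /=.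
apply: eq_bigr => mo _; rewrite comp_mpolyZ !comp_mpolyX rmorph_prod.
by congr (_ *: _); apply: eq_bigr => i _; rewrite rmorphXn /= tnth_mktuple.
Qed.

Lemma eq_comp_mpoly (R : nzRingType) n k (p : {mpoly R[n]})
    (lq lr : n.-tuple {mpoly R[k]}) :
  (forall i, tnth lq i = tnth lr i) -> p \mPo lq = p \mPo lr.
Proof. by move=> eq_lqr; congr (_ \mPo _); apply: eq_from_tnth. Qed.

Lemma comp_mpolyXU_tnth (R : nzRingType) n k (i : 'I_n)
    (lq : n.-tuple {mpoly R[k]}) :
  'X_i \mPo lq = tnth lq i.
Proof. by rewrite comp_mpolyXU -tnth_nth. Qed.

Lemma sum_msupp_mcoeff_eq (R : nzRingType) n (p : {mpoly R[n]})
    (c : 'X_{1..n} -> R) (k : 'X_{1..n}) :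
  \sum_(mo <- msupp p) p@_mo * c mo * (mo == k)%:R = p@_k * c k.
Proof.
transitivity (\sum_(mo <- msupp p) p@_mo * (mo == k)%:R * c k).
  by apply: eq_bigr => mo _; case: eqP => [->|_]; rewrite ?mulr1 ?mulr0 ?mul0r.
rewrite -mulr_suml {3}[p]mpolyE raddf_sum /=; congr (_ * _).
by apply: eq_bigr => mo _; rewrite mcoeffZ mcoeffX.
Qed.

Lemma bigD2 (R : Type) (idx : R) (op : Monoid.com_law idx) (I : finType)
    (a b : I) (F : I -> R) :
  a != b ->
  \big[op/idx]_i F i =
  op (op (F a) (F b)) (\big[op/idx]_(i | (i != a) && (i != b)) F i).
Proof.
by move=> neq_ab; rewrite (bigD1 a) // (bigD1 b) 1?eq_sym //= Monoid.mulmA.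
Qed.

Lemma swap_varsE n (a b : 'I_n) (p : {mpoly 'F_2[n]}) :
  swap_vars a b p = msym (tperm a b) p.
Proof.
rewrite -[RHS]comp_mpoly_id msym_mPo; apply: eq_comp_mpoly => i.
rewrite !tnth_mktuple; congr 'X_ _.
case: tpermP => [->|->|/eqP/negPf-> /eqP/negPf->] //; rewrite ?eqxx //.
by case: eqP.
Qed.

Section MergePair.
Variables (R : comNzRingType) (n : nat) (a b : 'I_n).
Hypothesis neq_ab : a != b.

Definition merge_pair : n.-tuple {mpoly R[n]} :=
  [tuple if i == a then 'X_a + 'X_b else if i == b then 0 else 'X_i | i < n].

Definition mswap (mo : 'X_{1..n}) : 'X_{1..n} := [multinom mo (tperm a b i) | i < n].

Lemma mswapK : involutive mswap.
Proof. by move=> mo; apply/mnmP => i; rewrite !mnmE tpermK. Qed.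

Definition mprod_off_pair (mo : 'X_{1..n}) : {mpoly R[n]} :=
  \prod_(i | (i != a) && (i != b)) 'X_i ^+ mo i.

Lemma mpolyX_pair (mo : 'X_{1..n}) :
  'X_[mo] = 'X_a ^+ mo a * 'X_b ^+ mo b * mprod_off_pair mo.
Proof. by rewrite mpolyXE_id (bigD2 _ _ neq_ab). Qed.

Lemma mpolyX_mswap (mo : 'X_{1..n}) :
  'X_[mswap mo] = 'X_a ^+ mo b * 'X_b ^+ mo a * mprod_off_pair mo.
Proof.
rewrite mpolyX_pair !mnmE tpermL tpermR; congr (_ * _).
by apply: eq_bigr => i /andP[ia ib]; rewrite mnmE tpermD // eq_sym.
Qed.

Lemma comp_mpolyX_merge_pair (mo : 'X_{1..n}) : (mo a <= 1)%N ->
  'X_[mo] \mPo merge_pair =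
  (mo b == 0%N)%:R *: ('X_[mo] + (mo a == 1%N)%:R *: 'X_[mswap mo]).
Proof.
move=> mo_a_le1.
rewrite comp_mpolyX (bigD2 _ _ neq_ab) /= !tnth_mktuple eqxx eq_sym (negPf neq_ab) eqxx.
have -> : \prod_(i | (i != a) && (i != b)) tnth merge_pair i ^+ mo i = mprod_off_pair mo.
  by apply: eq_bigr => i /andP[ia ib]; rewrite tnth_mktuple (negPf ia) (negPf ib).
rewrite (mpolyX_mswap mo) (mpolyX_pair mo).
case: (mo b) => [|k]; last by rewrite expr0n mulr0 mul0r scale0r.
case: (mo a) mo_a_le1 => [|[|//]] _ /=.
  by rewrite !expr0 scale0r addr0 !scale1r.
by rewrite !expr0 !expr1 !scale1r !mulr1 !mul1r mulrDl.
Qed.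

Lemma mcoeff_comp_merge_pair (p : {mpoly R[n]}) (k : 'X_{1..n}) :
  (forall mo, mo \in msupp p -> (mo a <= 1)%N) ->
  (p \mPo merge_pair)@_k =
  p@_k * (k b == 0%N)%:R + p@_(mswap k) * ((k a == 0%N) && (k b == 1%N))%:R.
Proof.
move=> le1_a; rewrite comp_mpolyEX raddf_sum /=.
transitivity (\sum_(mo <- msupp p)
  (p@_mo * (mo b == 0%N)%:R * (mo == k)%:R +
   p@_mo * ((mo b == 0%N) && (mo a == 1%N))%:R * (mo == mswap k)%:R)).
  rewrite !big_seq; apply: eq_bigr => mo /le1_a mo_a_le1.
  rewrite mcoeffZ comp_mpolyX_merge_pair // mcoeffZ mcoeffD mcoeffZ !mcoeffX.
  rewrite (can2_eq mswapK mswapK) -mulnb natrM.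
  by rewrite !mulrDr !mulrA.
by rewrite big_split /= !sum_msupp_mcoeff_eq !mnmE tpermL tpermR andbC.
Qed.

Lemma comp_merge_pair_id (p : {mpoly R[n]}) :
  (forall mo, mo \in msupp p -> (mo a + mo b <= 1)%N) ->
  msym (tperm a b) p = p ->
  p \mPo merge_pair = p.
Proof.
move=> le1_ab sym_p; apply/mpolyP => k.
rewrite mcoeff_comp_merge_pair; last first.
  by move=> mo /le1_ab; apply: leq_trans; apply: leq_addr.
have -> : p@_(mswap k) = p@_k by rewrite -{2}sym_p mcoeff_sym.
have [/le1_ab|/memN_msupp_eq0->] := boolP (k \in msupp p); last first.
  by rewrite !mul0r addr0.
by case: (k a) (k b) => [|[|//]] [|[|//]] //= _; rewrite ?mulr1 ?mulr0 ?addr0 ?add0r.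
Qed.

End MergePair.

Arguments merge_pair {R n}.

Section MergePairs.
Variables (R : comNzRingType) (m : nat).

Definition merge_pairs (s : seq 'I_m) : (m + m).-tuple {mpoly R[m + m]} :=
  [tuple match split j with
         | inl i => if i \in s then 'X_(lshift m i) + 'X_(rshift m i) else 'X_j
         | inr i => if i \in s then 0 else 'X_j
         end | j < m + m].

Lemma merge_pairs_nil : merge_pairs [::] = [tuple 'X_j | j < m + m].
Proof. by apply: eq_from_tnth => j; rewrite !tnth_mktuple; case: split. Qed.

Lemma tnth_merge_pairs_l s (i : 'I_m) :
  tnth (merge_pairs s) (lshift m i) =
  if i \in s then 'X_(lshift m i) + 'X_(rshift m i) else 'X_(lshift m i).
Proof. by rewrite tnth_mktuple (unsplitK (inl _ i)). Qed.

Lemma tnth_merge_pairs_r s (i : 'I_m) :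
  tnth (merge_pairs s) (rshift m i) = if i \in s then 0 else 'X_(rshift m i).
Proof. by rewrite tnth_mktuple (unsplitK (inr _ i)). Qed.

Lemma merge_pair_merge_pairs (i : 'I_m) s :
  [tuple tnth (merge_pair (lshift m i) (rshift m i)) j \mPo merge_pairs s | j < m + m]
  = merge_pairs (i :: s).
Proof.
apply: eq_from_tnth => j; rewrite !tnth_mktuple.
case: split_ordP => k ->; rewrite ?tnth_merge_pairs_l ?tnth_merge_pairs_r in_cons
  ?eq_lshift ?eq_rshift ?eq_lrshift ?eq_rlshift;
  have [->|_] /= := eqVneq k i; rewrite ?comp_mpolyD ?comp_mpoly0 ?comp_mpolyXU_tnth
    ?tnth_merge_pairs_l ?tnth_merge_pairs_r //.
by case: (i \in s); rewrite ?addr0.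
Qed.

Lemma comp_merge_pairs_id (g : {mpoly R[m + m]}) :
  (forall i mo, mo \in msupp g -> (mo (lshift m i) + mo (rshift m i) <= 1)%N) ->
  (forall i, msym (tperm (lshift m i) (rshift m i)) g = g) ->
  forall s, g \mPo merge_pairs s = g.
Proof.
move=> le1_pairs sym_g; elim=> [|i s IHs].
  by rewrite merge_pairs_nil comp_mpoly_id.
rewrite -merge_pair_merge_pairs -comp_mpolyA comp_merge_pair_id //.
- by rewrite eq_lrshift.
- exact: le1_pairs.
Qed.

Definition pair_sums : m.-tuple {mpoly R[m + m]} :=
  [tuple 'X_(lshift m i) + 'X_(rshift m i) | i < m].

Definition keep_first_half : (m + m).-tuple {mpoly R[m]} :=
  [tuple match split j with inl i => 'X_i | inr _ => 0 end | j < m + m].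

Lemma comp_pair_sums_keep_first_half (p : {mpoly R[m]}) :
  p \mPo pair_sums \mPo keep_first_half = p.
Proof.
rewrite comp_mpolyA -[RHS]comp_mpoly_id; apply: eq_comp_mpoly => i.
rewrite !tnth_mktuple comp_mpolyD !comp_mpolyXU_tnth !tnth_mktuple.
by rewrite (unsplitK (inl _ i)) (unsplitK (inr _ i)) addr0.
Qed.

Lemma comp_keep_first_half_pair_sums (g : {mpoly R[m + m]}) :
  (forall i mo, mo \in msupp g -> (mo (lshift m i) + mo (rshift m i) <= 1)%N) ->
  (forall i, msym (tperm (lshift m i) (rshift m i)) g = g) ->
  g \mPo keep_first_half \mPo pair_sums = g.
Proof.
move=> le1_pairs sym_g.
rewrite comp_mpolyA -{2}(comp_merge_pairs_id le1_pairs sym_g (enum 'I_m)).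
apply: eq_comp_mpoly => j; rewrite !tnth_mktuple.
case: split_ordP => i ->; rewrite ?tnth_merge_pairs_l ?tnth_merge_pairs_r mem_enum inE.
  by rewrite comp_mpolyXU_tnth tnth_mktuple.
by rewrite comp_mpoly0.
Qed.

End MergePairs.

Arguments pair_sums {R m}.
Arguments keep_first_half {R m}.

Lemma ordS_shift_pair m (i : 'I_m) :
  ordS (lshift m i) = lshift m (ordS i) /\ ordS (rshift m i) = rshift m (ordS i) \/
  ordS (lshift m i) = rshift m (ordS i) /\ ordS (rshift m i) = lshift m (ordS i).
Proof.
have lt_im := ltn_ord i.
have [lt_Sim|eq_Sim] : (i.+1 < m)%N \/ i.+1 = m by lia.
  by left; split; apply/val_inj => /=; rewrite !modn_small //; lia.
right; split; apply/val_inj => /=.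
  by rewrite eq_Sim modnn modn_small //; lia.
by rewrite -addnS eq_Sim !modnn.
Qed.

Lemma rotate_comp_pair_sums m (p : {mpoly 'F_2[m]}) :
  rotate (p \mPo pair_sums) = rotate p \mPo pair_sums.
Proof.
rewrite /rotate !comp_mpolyA; apply: eq_comp_mpoly => i.
rewrite !tnth_mktuple comp_mpolyD !comp_mpolyXU_tnth !tnth_mktuple.
by case: (ordS_shift_pair i) => -[-> ->] //; rewrite addrC.
Qed.

Theorem lemma1 (m : nat) (hm : (0 < m)%N) (g : {mpoly 'F_2[m + m]}) :
  reduced g ->
  (forall i : 'I_m, swap_vars (lshift m i) (rshift m i) g = g) ->
  (forall (i : 'I_m) (mo : 'X_{1..m + m}), mo \in msupp g ->
      ~~ ((0 < mo (lshift m i))%N && (0 < mo (rshift m i))%N)) ->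
  rot_sym g ->
  exists gamma : {mpoly 'F_2[m]},
    rot_sym gamma /\
    g = gamma \mPo [tuple ('X_(lshift m i) + 'X_(rshift m i) : {mpoly 'F_2[m + m]}) | i < m].
Proof.
move=> red_g swap_g disj_g rot_g.
have le1_pairs i mo : mo \in msupp g -> (mo (lshift m i) + mo (rshift m i) <= 1)%N.
  move=> supp_mo; have red_mo := red_g _ supp_mo.
  move: (red_mo (lshift m i)) (red_mo (rshift m i)) (disj_g i _ supp_mo); lia.
have sym_g i : msym (tperm (lshift m i) (rshift m i)) g = g.
  by have := swap_g i; rewrite swap_varsE.
have g_eq := comp_keep_first_half_pair_sums le1_pairs sym_g.
exists (g \mPo keep_first_half); split; last exact/esym.
rewrite /rot_sym -{1}(comp_pair_sums_keep_first_half (rotate _)).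
by rewrite -rotate_comp_pair_sums g_eq rot_g.
Qed.
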